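(* Let $\mathcal C$ be a braided monoidal category, $\mathcal A$ a $\mathcal C$-monoidal category, $\mathcal B$ a $\mathcal C$-category and $\omega:\mathcal B\to\mathcal A$ a $\mathcal C$-functor. If $\mathrm{Nat}_{\mathcal C}(\omega,\omega\otimes-)$ is representable, then the representing object $C=\mathrm{coend}_{\mathcal C}(\omega)$ is a coalgebra in $\mathcal A$ (with $\Delta,\varepsilon$ determined by $(1_\omega\otimes\Delta)\delta=(\delta\otimes1_C)\delta$ and $(1_\omega\otimes\varepsilon)\delta=\rho^{-1}_\omega$ for the universal morphism $\delta:\omega\to\omega\otimes C$), uniquely determined up to isomorphism of coalgebras. Moreover every $\omega(P)$, $P\in\mathcal B$, is a $C$-comodule via $\delta:\omega(P)\to\omega(P)\otimes C$, every $\omega(f)$ is a morphism of $C$-comodules, and for $X\in\mathcal C$, $P\in\mathcal B$ the comodule $\omega(X\otimes P)$ is isomorphic as a $C$-comodule to $X\otimes\omega(P)$ with the structure induced by $\omega(P)$.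
   Context: A $\mathcal C$-category is a category with a bifunctor $\mathcal C\times\mathcal B\to\mathcal B$ and coherent associativity/unit isomorphisms; a $\mathcal C$-functor $\omega$ comes with a coherent natural isomorphism $\xi:\omega(X\otimes P)\to X\otimes\omega(P)$; a $\mathcal C$-morphism $\varphi:\omega\to\omega'$ is a natural transformation with $\xi'\varphi(X\otimes P)=(1_X\otimes\varphi(P))\xi$. $\mathcal A$ $\mathcal C$-monoidal: a monoidal category which is a $\mathcal C$-category with compatible coherent isomorphisms, so that $\omega\otimes M:P\mapsto\omega(P)\otimes M$ is a $\mathcal C$-functor for $M\in\mathcal A$. $\mathrm{Nat}_{\mathcal C}(\omega,\omega\otimes M)$ is the set of $\mathcal C$-morphisms; representability means a natural bijection $\mathrm{Nat}_{\mathcal C}(\omega,\omega\otimes M)\cong\mathcal A(C,M)$, the universal morphism $\delta$ corresponding to $1_C$. The $C$-comodule structure on $X\otimes\omega(P)$ is $1_X\otimes\delta_P$ (up to the associativity isomorphism). *)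

(* Morphisms are compared with Leibniz
   equality. *)

Record Category := {
  ob :> Type;
  hom : ob -> ob -> Type;
  idm : forall a, hom a a;
  comp : forall x y z, hom y z -> hom x y -> hom x z;
  comp_id_l : forall a b (f : hom a b), comp a b b (idm b) f = f;
  comp_id_r : forall a b (f : hom a b), comp a a b f (idm a) = f;
  comp_assoc : forall a b c d (f : hom a b) (g : hom b c) (h : hom c d),
      comp a c d h (comp a b c g f) = comp a b d (comp b c d h g) f }.

Arguments hom {_} _ _.
Arguments idm {_} a.
Arguments comp {_ x y z} _ _.

Notation "g ∘ f" := (comp g f) (at level 40, left associativity).

Definition is_inverse {K : Category} {a b : K} (f : hom a b) (g : hom b a) : Prop :=
  g ∘ f = idm a /\ f ∘ g = idm b.

Record Monoidal (K : Category) := {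
  tens : K -> K -> K;
  tensf : forall a b c d, hom a b -> hom c d -> hom (tens a c) (tens b d);
  munit : K;
  tensf_id : forall a c, tensf a a c c (idm a) (idm c) = idm (tens a c);
  tensf_comp : forall a b e c d k (f : hom a b) (g : hom b e) (h : hom c d) (l : hom d k),
      tensf a e c k (g ∘ f) (l ∘ h) = tensf b e d k g l ∘ tensf a b c d f h;
  assoc : forall a b c, hom (tens (tens a b) c) (tens a (tens b c));
  assoc_inv : forall a b c, hom (tens a (tens b c)) (tens (tens a b) c);
  assoc_iso : forall a b c, is_inverse (assoc a b c) (assoc_inv a b c);
  assoc_nat : forall a a' b b' c c' (f : hom a a') (g : hom b b') (h : hom c c'),
      assoc a' b' c' ∘ tensf _ _ _ _ (tensf _ _ _ _ f g) h
      = tensf _ _ _ _ f (tensf _ _ _ _ g h) ∘ assoc a b c;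
  lunit : forall a, hom (tens munit a) a;
  lunit_inv : forall a, hom a (tens munit a);
  lunit_iso : forall a, is_inverse (lunit a) (lunit_inv a);
  lunit_nat : forall a b (f : hom a b),
      lunit b ∘ tensf _ _ _ _ (idm munit) f = f ∘ lunit a;
  runit : forall a, hom (tens a munit) a;
  runit_inv : forall a, hom a (tens a munit);
  runit_iso : forall a, is_inverse (runit a) (runit_inv a);
  runit_nat : forall a b (f : hom a b),
      runit b ∘ tensf _ _ _ _ f (idm munit) = f ∘ runit a;
  pentagon : forall a b c d,
      assoc a b (tens c d) ∘ assoc (tens a b) c d
      = tensf _ _ _ _ (idm a) (assoc b c d) ∘ assoc a (tens b c) d
        ∘ tensf _ _ _ _ (assoc a b c) (idm d);
  triangle : forall a b,
      tensf _ _ _ _ (idm a) (lunit b) ∘ assoc a munit b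
      = tensf _ _ _ _ (runit a) (idm b) }.

Arguments tens {K} _ a b.
Arguments tensf {K} _ {a b c d} f g.
Arguments munit {K} _.
Arguments assoc {K} _ a b c.
Arguments assoc_inv {K} _ a b c.
Arguments lunit {K} _ a.
Arguments lunit_inv {K} _ a.
Arguments runit {K} _ a.
Arguments runit_inv {K} _ a.

Record Braiding (K : Category) (M : Monoidal K) := {
  braid : forall a b, hom (tens M a b) (tens M b a);
  braid_inv : forall a b, hom (tens M b a) (tens M a b);
  braid_iso : forall a b, is_inverse (braid a b) (braid_inv a b);
  braid_nat : forall a a' b b' (f : hom a a') (g : hom b b'),
      braid a' b' ∘ tensf M f g = tensf M g f ∘ braid a b;
  hexagon1 : forall a b c,
      assoc M b c a ∘ braid a (tens M b c) ∘ assoc M a b c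
      = tensf M (idm b) (braid a c) ∘ assoc M b a c ∘ tensf M (braid a b) (idm c);
  hexagon2 : forall a b c,
      assoc_inv M c a b ∘ braid (tens M a b) c ∘ assoc_inv M a b c
      = tensf M (braid a c) (idm b) ∘ assoc_inv M a c b ∘ tensf M (idm a) (braid b c) }.

Arguments Braiding {K} M.

Record Action (C : Category) (M : Monoidal C) (B : Category) := {
  act : C -> B -> B;
  actf : forall X Y P Q, hom X Y -> hom P Q -> hom (act X P) (act Y Q);
  actf_id : forall X P, actf X X P P (idm X) (idm P) = idm (act X P);
  actf_comp : forall X Y Z P Q R (f : hom X Y) (g : hom Y Z) (h : hom P Q) (l : hom Q R),
      actf X Z P R (g ∘ f) (l ∘ h) = actf Y Z Q R g l ∘ actf X Y P Q f h;
  aassoc : forall X Y P, hom (act (tens M X Y) P) (act X (act Y P));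
  aassoc_inv : forall X Y P, hom (act X (act Y P)) (act (tens M X Y) P);
  aassoc_iso : forall X Y P, is_inverse (aassoc X Y P) (aassoc_inv X Y P);
  aassoc_nat : forall X X' Y Y' P P' (f : hom X X') (g : hom Y Y') (h : hom P P'),
      aassoc X' Y' P' ∘ actf _ _ _ _ (tensf M f g) h
      = actf _ _ _ _ f (actf _ _ _ _ g h) ∘ aassoc X Y P;
  aunit : forall P, hom (act (munit M) P) P;
  aunit_inv : forall P, hom P (act (munit M) P);
  aunit_iso : forall P, is_inverse (aunit P) (aunit_inv P);
  aunit_nat : forall P Q (f : hom P Q),
      aunit Q ∘ actf _ _ _ _ (idm (munit M)) f = f ∘ aunit P;
  apentagon : forall X Y Z P,
      aassoc X Y (act Z P) ∘ aassoc (tens M X Y) Z P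
      = actf _ _ _ _ (idm X) (aassoc Y Z P) ∘ aassoc X (tens M Y Z) P
        ∘ actf _ _ _ _ (assoc M X Y Z) (idm P);
  atriangle : forall X P,
      actf _ _ _ _ (idm X) (aunit P) ∘ aassoc X (munit M) P
      = actf _ _ _ _ (runit M X) (idm P) }.

Arguments Action {C} M B.
Arguments act {C M B} _ X P.
Arguments actf {C M B} _ {X Y P Q} f g.
Arguments aassoc {C M B} _ X Y P.
Arguments aassoc_inv {C M B} _ X Y P.
Arguments aunit {C M B} _ P.
Arguments aunit_inv {C M B} _ P.

Record Functor (B D : Category) := {
  fob :> B -> D;
  fhom : forall P Q, hom P Q -> hom (fob P) (fob Q);
  fhom_id : forall P, fhom P P (idm P) = idm (fob P);
  fhom_comp : forall P Q R (f : hom P Q) (g : hom Q R),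
      fhom P R (g ∘ f) = fhom Q R g ∘ fhom P Q f }.

Arguments fob {B D} _ P.
Arguments fhom {B D} _ {P Q} f.

Record CFunctor (C : Category) (M : Monoidal C) (B D : Category)
       (AB : Action M B) (AD : Action M D) := {
  cfun :> Functor B D;
  xi : forall X P, hom (cfun (act AB X P)) (act AD X (cfun P));
  xi_inv : forall X P, hom (act AD X (cfun P)) (cfun (act AB X P));
  xi_iso : forall X P, is_inverse (xi X P) (xi_inv X P);
  xi_nat : forall X Y P Q (f : hom X Y) (g : hom P Q),
      xi Y Q ∘ fhom cfun (actf AB f g) = actf AD f (fhom cfun g) ∘ xi X P;
  xi_assoc : forall X Y P,
      aassoc AD X Y (cfun P) ∘ xi (tens M X Y) P
      = actf AD (idm X) (xi Y P) ∘ xi X (act AB Y P) ∘ fhom cfun (aassoc AB X Y P);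
  xi_unit : forall P,
      aunit AD (cfun P) ∘ xi (munit M) P = fhom cfun (aunit AB P) }.

Arguments CFunctor {C M B D} AB AD.
Arguments cfun {C M B D AB AD} _.
Arguments xi {C M B D AB AD} _ X P.
Arguments xi_inv {C M B D AB AD} _ X P.

(* ---------- C-monoidal categories ----------
   A monoidal category (A, AM) which is a C-category (AA) together with a coherent
   natural isomorphism chi : (X . U) (x) V -> X . (U (x) V), compatible with the
   action associativity/unit and with the associativity/right unit of A; this is
   exactly what makes omega (x) M : P |-> omega(P) (x) M a C-functor. *)
Record CMonoidal (C : Category) (M : Monoidal C) (A : Category) (AM : Monoidal A)
       (AA : Action M A) := {
  chi : forall X U V, hom (tens AM (act AA X U) V) (act AA X (tens AM U V));
  chi_inv : forall X U V, hom (act AA X (tens AM U V)) (tens AM (act AA X U) V);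
  chi_iso : forall X U V, is_inverse (chi X U V) (chi_inv X U V);
  chi_nat : forall X X' U U' V V' (f : hom X X') (g : hom U U') (h : hom V V'),
      chi X' U' V' ∘ tensf AM (actf AA f g) h = actf AA f (tensf AM g h) ∘ chi X U V;
  chi_aassoc : forall X Y U V,
      aassoc AA X Y (tens AM U V) ∘ chi (tens M X Y) U V
      = actf AA (idm X) (chi Y U V) ∘ chi X (act AA Y U) V
        ∘ tensf AM (aassoc AA X Y U) (idm V);
  chi_aunit : forall U V,
      aunit AA (tens AM U V) ∘ chi (munit M) U V = tensf AM (aunit AA U) (idm V);
  chi_assoc : forall X U V W,
      chi X U (tens AM V W) ∘ assoc AM (act AA X U) V W
      = actf AA (idm X) (assoc AM U V W) ∘ chi X (tens AM U V) W
        ∘ tensf AM (chi X U V) (idm W);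
  chi_runit : forall X U,
      actf AA (idm X) (runit AM U) ∘ chi X U (munit AM) = runit AM (act AA X U) }.

Arguments CMonoidal {C M A} AM AA.
Arguments chi {C M A AM AA} _ X U V.
Arguments chi_inv {C M A AM AA} _ X U V.

Section NatC.
Context {C : Category} {M : Monoidal C} {A : Category} {AM : Monoidal A}
        {AA : Action M A} (CA : CMonoidal AM AA)
        {B : Category} {AB : Action M B} (w : CFunctor AB AA).

(* phi : omega -> omega (x) N is a C-morphism (a natural transformation
   compatible with the C-functor structures xi of omega and of omega (x) N). *)
Definition is_CMorphism (N : A) (phi : forall P, hom (w P) (tens AM (w P) N)) : Prop :=
  (forall P Q (f : hom P Q),
      phi Q ∘ fhom w f = tensf AM (fhom w f) (idm N) ∘ phi P) /\
  (forall X P,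
      chi CA X (w P) N ∘ tensf AM (xi w X P) (idm N) ∘ phi (act AB X P)
      = actf AA (idm X) (phi P) ∘ xi w X P).

Record NatC (N : A) := {
  ncomp : forall P, hom (w P) (tens AM (w P) N);
  ncomp_CMorphism : is_CMorphism N ncomp }.

(* Representability of Nat_C(omega, omega (x) -): Phi_N : Nat_C(omega, omega (x) N)
   -> A(Cob, N) is a bijection (inverse Psi_N), natural in N. *)
Definition represents (Cob : A) (Phi : forall N, NatC N -> hom Cob N)
           (Psi : forall N, hom Cob N -> NatC N) : Prop :=
  (forall N (f : hom Cob N), Phi N (Psi N f) = f) /\
  (forall N (phi : NatC N) P, ncomp _ (Psi N (Phi N phi)) P = ncomp _ phi P) /\
  (forall N N' (f : hom N N') (phi : NatC N) (phi' : NatC N'),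
      (forall P, ncomp _ phi' P = tensf AM (idm (w P)) f ∘ ncomp _ phi P) ->
      Phi N' phi' = f ∘ Phi N phi).

Definition universal (Cob : A) (Psi : forall N, hom Cob N -> NatC N) :
  forall P, hom (w P) (tens AM (w P) Cob) :=
  ncomp _ (Psi Cob (idm Cob)).

Definition coend_Delta_eq (Cob : A) (delta : forall P, hom (w P) (tens AM (w P) Cob))
           (Delta : hom Cob (tens AM Cob Cob)) : Prop :=
  forall P, tensf AM (idm (w P)) Delta ∘ delta P
            = assoc AM (w P) Cob Cob ∘ tensf AM (delta P) (idm Cob) ∘ delta P.

Definition coend_eps_eq (Cob : A) (delta : forall P, hom (w P) (tens AM (w P) Cob))
           (eps : hom Cob (munit AM)) : Prop :=
  forall P, tensf AM (idm (w P)) eps ∘ delta P = runit_inv AM (w P).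

End NatC.

Arguments ncomp {C M A AM AA CA B AB w N} n P.

Section Coalg.
Context {A : Category} (AM : Monoidal A).

Definition is_coalgebra (K : A) (Delta : hom K (tens AM K K)) (eps : hom K (munit AM)) : Prop :=
  assoc AM K K K ∘ tensf AM Delta (idm K) ∘ Delta = tensf AM (idm K) Delta ∘ Delta /\
  lunit AM K ∘ tensf AM eps (idm K) ∘ Delta = idm K /\
  runit AM K ∘ tensf AM (idm K) eps ∘ Delta = idm K.

Definition is_coalgebra_hom (K K' : A) (Delta : hom K (tens AM K K)) (eps : hom K (munit AM))
           (Delta' : hom K' (tens AM K' K')) (eps' : hom K' (munit AM)) (g : hom K K') : Prop :=
  tensf AM g g ∘ Delta = Delta' ∘ g /\ eps' ∘ g = eps.

Definition is_comodule (K : A) (Delta : hom K (tens AM K K)) (eps : hom K (munit AM))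
           (U : A) (rho : hom U (tens AM U K)) : Prop :=
  assoc AM U K K ∘ tensf AM rho (idm K) ∘ rho = tensf AM (idm U) Delta ∘ rho /\
  runit AM U ∘ tensf AM (idm U) eps ∘ rho = idm U.

Definition is_comodule_hom (K U V : A) (rhoU : hom U (tens AM U K))
           (rhoV : hom V (tens AM V K)) (g : hom U V) : Prop :=
  rhoV ∘ g = tensf AM g (idm K) ∘ rhoU.

End Coalg.

From Corelib Require Import ssreflect.

(* Representability says that [f |-> (1 (x) f) delta] is a bijection from
   morphisms [Cob -> N] to C-morphisms [omega -> omega (x) N]; in particular a
   morphism out of [Cob] is determined by its composite with [delta].  Since
   [P |-> alpha (delta_P (x) 1) delta_P] and [P |-> rho^-1] are C-morphisms, they
   define [Delta] and [eps]; coassociativity and counitality are checked after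
   composing with [delta], where they reduce to the pentagon, the triangle and
   Kelly's identity [rho_(a (x) b) = (1 (x) rho_b) alpha].  That [delta] is a
   C-morphism gives the comodule statements, and two representing objects are
   compared by the morphisms corresponding to each other's universal morphisms. *)

Ltac comp_normalize := repeat rewrite ?comp_assoc ?comp_id_l ?comp_id_r.

Section CategoryFacts.
Context {K : Category}.

(* Composites are kept left-associated by [comp_normalize], so an equation
   between composites is rewritten inside a longer chain through these. *)
Lemma postcomp_eq {a b c e : K} {g : hom b c} {f : hom a b} {x : hom a c} :
  g ∘ f = x -> forall u : hom c e, u ∘ g ∘ f = u ∘ x.
Proof. by move=> E u; rewrite -comp_assoc E. Qed.

Lemma postcomp_eq2 {a b c d e : K} {g : hom b c} {f : hom a b} {k : hom d c} {h : hom a d} :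
  g ∘ f = k ∘ h -> forall u : hom c e, u ∘ g ∘ f = u ∘ k ∘ h.
Proof. by move=> E u; rewrite -!comp_assoc E. Qed.

Lemma postcomp_eq3 {a b c d e : K} {p : hom c d} {q : hom b c} {r : hom a b} {x : hom a d} :
  p ∘ q ∘ r = x -> forall u : hom d e, u ∘ p ∘ q ∘ r = u ∘ x.
Proof. by move=> E u; rewrite -E !comp_assoc. Qed.

Lemma inverse_comp {a b c : K} (g : hom b c) g' (h : hom a b) h' :
  is_inverse g g' -> is_inverse h h' -> is_inverse (g ∘ h) (h' ∘ g').
Proof.
move=> [gK Kg] [hK Kh]; split.
- by rewrite comp_assoc -(comp_assoc _ _ _ _ _ g) gK comp_id_r hK.
- by rewrite comp_assoc -(comp_assoc _ _ _ _ _ h') Kh comp_id_r Kg.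
Qed.

Lemma inverse_square {x y x' y' : K} (f : hom x' y') f' (g : hom x y) g'
    (a : hom x x') (b : hom y y') :
  is_inverse f f' -> is_inverse g g' -> f ∘ a = b ∘ g -> a ∘ g' = f' ∘ b.
Proof.
move=> [fK _] [_ Kg] E.
transitivity (f' ∘ f ∘ a ∘ g'); first by rewrite fK comp_id_l.
by rewrite -(comp_assoc _ _ _ _ _ a f f') E -!comp_assoc Kg comp_id_r.
Qed.

End CategoryFacts.

Section MonoidalFacts.
Context {K : Category} (M : Monoidal K).

Lemma tensf_compl (a b e c : K) (f : hom a b) (g : hom b e) :
  tensf M (g ∘ f) (idm c) = tensf M g (idm c) ∘ tensf M f (idm c).
Proof. by rewrite -tensf_comp comp_id_l. Qed.

Lemma tensf_compr (a b e c : K) (f : hom a b) (g : hom b e) :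
  tensf M (idm c) (g ∘ f) = tensf M (idm c) g ∘ tensf M (idm c) f.
Proof. by rewrite -tensf_comp comp_id_l. Qed.

Lemma tensf_split (a b c d : K) (f : hom a b) (g : hom c d) :
  tensf M f g = tensf M f (idm d) ∘ tensf M (idm a) g.
Proof. by rewrite -tensf_comp comp_id_l comp_id_r. Qed.

Lemma tensf_interchange (a b c d : K) (f : hom a b) (g : hom c d) :
  tensf M f (idm d) ∘ tensf M (idm a) g = tensf M (idm b) g ∘ tensf M f (idm c).
Proof. by rewrite -tensf_split -tensf_comp comp_id_l comp_id_r. Qed.

Lemma tensfl_eq (a b e c : K) {g : hom b e} {f : hom a b} {x : hom a e} :
  g ∘ f = x -> tensf M g (idm c) ∘ tensf M f (idm c) = tensf M x (idm c).
Proof. by move=> E; rewrite -tensf_compl E. Qed.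

Lemma tensfl_eq3 (a b d e c : K) {p : hom d e} {g : hom b d} {f : hom a b} {x : hom a e} :
  p ∘ g ∘ f = x ->
  tensf M p (idm c) ∘ tensf M g (idm c) ∘ tensf M f (idm c) = tensf M x (idm c).
Proof. by move=> E; rewrite -!tensf_compl E. Qed.

Lemma tensfl_inverse (a b c : K) (f : hom a b) f' :
  is_inverse f f' -> is_inverse (tensf M f (idm c)) (tensf M f' (idm c)).
Proof. by move=> [fK Kf]; split; [rewrite (tensfl_eq _ _ _ _ fK) | rewrite (tensfl_eq _ _ _ _ Kf)]; rewrite tensf_id. Qed.

Lemma assoc_nat_l (a a' b c : K) (f : hom a a') :
  assoc M a' b c ∘ tensf M (tensf M f (idm b)) (idm c)
  = tensf M f (idm (tens M b c)) ∘ assoc M a b c.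
Proof. by rewrite assoc_nat tensf_id. Qed.

Lemma assoc_nat_m (a b b' c : K) (g : hom b b') :
  assoc M a b' c ∘ tensf M (tensf M (idm a) g) (idm c)
  = tensf M (idm a) (tensf M g (idm c)) ∘ assoc M a b c.
Proof. by rewrite assoc_nat. Qed.

Lemma assoc_nat_r (a b c c' : K) (h : hom c c') :
  assoc M a b c' ∘ tensf M (idm (tens M a b)) h
  = tensf M (idm a) (tensf M (idm b) h) ∘ assoc M a b c.
Proof. by rewrite -(tensf_id _ M a b) assoc_nat. Qed.

Lemma runit_inv_nat (a b : K) (f : hom a b) :
  tensf M f (idm (munit M)) ∘ runit_inv M a = runit_inv M b ∘ f.
Proof. by apply: inverse_square; [apply: runit_iso | apply: runit_iso | apply: runit_nat]. Qed.

Lemma tensf_unit_inj (a b : K) (f g : hom a b) :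
  tensf M f (idm (munit M)) = tensf M g (idm (munit M)) -> f = g.
Proof.
have runit_conj (h : hom a b) :
    h = runit M b ∘ tensf M h (idm (munit M)) ∘ runit_inv M a.
  by rewrite runit_nat -comp_assoc (proj2 (runit_iso _ _ _)) comp_id_r.
by move=> E; rewrite (runit_conj f) (runit_conj g) E.
Qed.

Lemma assoc_inj (x y z t : K) (u v : hom x (tens M (tens M y z) t)) :
  assoc M y z t ∘ u = assoc M y z t ∘ v -> u = v.
Proof.
move=> /(f_equal (comp (assoc_inv M y z t))).
by rewrite !comp_assoc (proj1 (assoc_iso _ _ _ _ _)) !comp_id_l.
Qed.

(* Kelly's lemma, derived from the pentagon and triangle axioms. *)
Lemma tensf_runit_assoc (a b : K) :
  tensf M (idm a) (runit M b) ∘ assoc M a b (munit M) = runit M (tens M a b).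
Proof.
apply: tensf_unit_inj; apply: assoc_inj.
rewrite -(triangle _ M (tens M a b) (munit M)) tensf_compl comp_assoc assoc_nat.
rewrite -(triangle _ M b (munit M)) tensf_compr.
have pent := pentagon _ M a b (munit M) (munit M).
rewrite -comp_assoc in pent.
by rewrite -!comp_assoc -pent comp_assoc -assoc_nat tensf_id; comp_normalize.
Qed.

End MonoidalFacts.

Section CMonoidalFacts.
Context {C : Category} {CM : Monoidal C} {A : Category} {AM : Monoidal A}
  {AC : Action CM A} (ACM : CMonoidal AM AC).

Lemma actf_compr (X : C) (a b e : A) (f : hom a b) (g : hom b e) :
  actf AC (idm X) (g ∘ f) = actf AC (idm X) g ∘ actf AC (idm X) f.
Proof. by rewrite -actf_comp comp_id_l. Qed.

Lemma actfr_eq (X : C) (a b e : A) {g : hom b e} {f : hom a b} {x : hom a e} :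
  g ∘ f = x -> actf AC (idm X) g ∘ actf AC (idm X) f = actf AC (idm X) x.
Proof. by move=> E; rewrite -actf_compr E. Qed.

Lemma actfr_inverse (X : C) (a b : A) (f : hom a b) f' :
  is_inverse f f' -> is_inverse (actf AC (idm X) f) (actf AC (idm X) f').
Proof.
by move=> [fK Kf]; split; [rewrite (actfr_eq _ _ _ _ fK) | rewrite (actfr_eq _ _ _ _ Kf)];
  rewrite actf_id.
Qed.

Lemma chi_nat_l X U U' V (g : hom U U') :
  chi ACM X U' V ∘ tensf AM (actf AC (idm X) g) (idm V)
  = actf AC (idm X) (tensf AM g (idm V)) ∘ chi ACM X U V.
Proof. by rewrite chi_nat. Qed.

Lemma chi_nat_r X U V V' (h : hom V V') :
  chi ACM X U V' ∘ tensf AM (idm (act AC X U)) h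
  = actf AC (idm X) (tensf AM (idm U) h) ∘ chi ACM X U V.
Proof. by rewrite -(actf_id _ _ _ AC X U) chi_nat. Qed.

Lemma chi_inv_nat_l X U U' V (g : hom U U') :
  chi_inv ACM X U' V ∘ actf AC (idm X) (tensf AM g (idm V))
  = tensf AM (actf AC (idm X) g) (idm V) ∘ chi_inv ACM X U V.
Proof. by symmetry; apply: inverse_square; [apply: chi_iso | apply: chi_iso | apply: chi_nat_l]. Qed.

Lemma chi_inv_nat_r X U V V' (h : hom V V') :
  chi_inv ACM X U V' ∘ actf AC (idm X) (tensf AM (idm U) h)
  = tensf AM (idm (act AC X U)) h ∘ chi_inv ACM X U V.
Proof. by symmetry; apply: inverse_square; [apply: chi_iso | apply: chi_iso | apply: chi_nat_r]. Qed.

Lemma chi_runit_inv X U :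
  chi ACM X U (munit AM) ∘ runit_inv AM (act AC X U) = actf AC (idm X) (runit_inv AM U).
Proof.
rewrite -[RHS]comp_id_r.
apply: (inverse_square (actf AC (idm X) (runit AM U))).
- by apply: actfr_inverse; apply: runit_iso.
- by apply: runit_iso.
- by rewrite chi_runit comp_id_l.
Qed.

Lemma runit_chi_inv X U :
  runit AM (act AC X U) ∘ chi_inv ACM X U (munit AM) = actf AC (idm X) (runit AM U).
Proof.
by rewrite -(chi_runit _ _ _ _ _ ACM X U) -comp_assoc (proj2 (chi_iso _ _ _ _ _ _ _ _ _))
  comp_id_r.
Qed.

Lemma chi_inv_assoc X U V W :
  assoc AM (act AC X U) V W ∘ tensf AM (chi_inv ACM X U V) (idm W)
    ∘ chi_inv ACM X (tens AM U V) W
  = chi_inv ACM X U (tens AM V W) ∘ actf AC (idm X) (assoc AM U V W).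
Proof.
rewrite -comp_assoc; apply: inverse_square; first by apply: chi_iso.
- by apply: inverse_comp; [apply: chi_iso | apply: tensfl_inverse; apply: chi_iso].
- by rewrite chi_assoc -comp_assoc.
Qed.

Lemma act_comodule (K : A) (Delta : hom K (tens AM K K)) (eps : hom K (munit AM))
    (X : C) (U : A) (rho : hom U (tens AM U K)) :
  is_comodule AM K Delta eps U rho ->
  is_comodule AM K Delta eps (act AC X U) (chi_inv ACM X U K ∘ actf AC (idm X) rho).
Proof.
move=> [rho_coassoc rho_counit]; split.
- rewrite tensf_compl; comp_normalize.
  rewrite -chi_inv_nat_r (postcomp_eq (actfr_eq _ _ _ _ (eq_sym rho_coassoc))) !actf_compr.
  comp_normalize.
  by rewrite -(postcomp_eq2 (chi_inv_nat_l _ _ _ _ _)) chi_inv_assoc.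
- comp_normalize.
  rewrite -(postcomp_eq2 (chi_inv_nat_r _ _ _ _ _)).
  by rewrite runit_chi_inv -!actf_compr rho_counit actf_id.
Qed.

End CMonoidalFacts.

Section CMorphisms.
Context {C : Category} {CM : Monoidal C} {A : Category} {AM : Monoidal A}
  {AC : Action CM A} (ACM : CMonoidal AM AC)
  {B : Category} {BC : Action CM B} (w : CFunctor BC AC).

Lemma is_CMorphism_postcomp N N' (f : hom N N') (phi : forall P, hom (w P) (tens AM (w P) N)) :
  is_CMorphism ACM w N phi ->
  is_CMorphism ACM w N' (fun P => tensf AM (idm (w P)) f ∘ phi P).
Proof.
move=> [phi_nat phi_xi]; split.
- by move=> P Q g; rewrite -comp_assoc phi_nat !comp_assoc -tensf_interchange.
- move=> X P; comp_normalize.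
  rewrite (postcomp_eq2 (tensf_interchange AM _ _ _ _ _ _)) chi_nat_r.
  by rewrite (postcomp_eq3 (phi_xi X P)) actf_compr; comp_normalize.
Qed.

Lemma is_CMorphism_coaction_comp N N'
    (phi : forall P, hom (w P) (tens AM (w P) N)) (psi : forall P, hom (w P) (tens AM (w P) N')) :
  is_CMorphism ACM w N phi -> is_CMorphism ACM w N' psi ->
  is_CMorphism ACM w (tens AM N' N)
    (fun P => assoc AM (w P) N' N ∘ tensf AM (psi P) (idm N) ∘ phi P).
Proof.
move=> [phi_nat phi_xi] [psi_nat psi_xi]; split.
- move=> P Q g.
  rewrite (postcomp_eq2 (phi_nat P Q g)) (postcomp_eq (tensfl_eq _ _ _ _ _ (psi_nat P Q g))).
  by rewrite tensf_compl; comp_normalize; rewrite assoc_nat_l; comp_normalize.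
- move=> X P; comp_normalize.
  rewrite -(postcomp_eq2 (assoc_nat_l _ _ _ _ _ _)) chi_assoc.
  rewrite (postcomp_eq3 (tensfl_eq3 _ _ _ _ _ _ (psi_xi X P))) tensf_compl; comp_normalize.
  rewrite (postcomp_eq2 (chi_nat_l _ _ _ _ _ _)) (postcomp_eq3 (phi_xi X P)).
  by rewrite !actf_compr; comp_normalize.
Qed.

Lemma runit_inv_CMorphism : is_CMorphism ACM w (munit AM) (fun P => runit_inv AM (w P)).
Proof.
split=> [P Q g | X P]; first by rewrite runit_inv_nat.
by rewrite -comp_assoc runit_inv_nat comp_assoc chi_runit_inv.
Qed.

Lemma xi_is_comodule_hom N (phi : forall P, hom (w P) (tens AM (w P) N)) :
  is_CMorphism ACM w N phi -> forall X P,
  is_comodule_hom AM N (w (act BC X P)) (act AC X (w P))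
    (phi (act BC X P)) (chi_inv ACM X (w P) N ∘ actf AC (idm X) (phi P)) (xi w X P).
Proof.
move=> [_ phi_xi] X P.
rewrite /is_comodule_hom -comp_assoc -(postcomp_eq (phi_xi X P)); comp_normalize.
by rewrite (proj1 (chi_iso _ _ _ _ _ _ _ _ _)) comp_id_l.
Qed.

End CMorphisms.

Section Coend.
Context {C : Category} {CM : Monoidal C} {A : Category} {AM : Monoidal A}
  {AC : Action CM A} {ACM : CMonoidal AM AC}
  {B : Category} {BC : Action CM B} {w : CFunctor BC AC}
  {Cob : A} {Phi : forall N : A, NatC ACM w N -> hom Cob N}
  {Psi : forall N : A, hom Cob N -> NatC ACM w N}.

Local Notation delta := (universal ACM w Cob Psi).

Lemma universal_CMorphism : is_CMorphism ACM w Cob delta.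
Proof. exact: ncomp_CMorphism. Qed.

Definition coend_comult : hom Cob (tens AM Cob Cob) :=
  Phi _ (Build_NatC _ _ _ _
           (is_CMorphism_coaction_comp ACM w _ _ _ _ universal_CMorphism universal_CMorphism)).

Definition coend_counit : hom Cob (munit AM) :=
  Phi _ (Build_NatC _ _ _ _ (runit_inv_CMorphism ACM w)).

Hypothesis rep : represents ACM w Cob Phi Psi.

(* Yoneda: [delta] corresponds to [1_Cob], so naturality of [Phi] in [N]
   recovers every [phi] from [Phi N phi] and [delta]. *)
Lemma universal_factor N (phi : NatC ACM w N) P :
  ncomp phi P = tensf AM (idm (w P)) (Phi N phi) ∘ delta P.
Proof.
case: rep => [PhiK [PsiK Phi_nat]].
pose phi' := Build_NatC _ _ _ _
  (is_CMorphism_postcomp ACM w _ _ (Phi N phi) _ universal_CMorphism).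
have : Phi N phi' = Phi N phi ∘ Phi Cob (Psi Cob (idm Cob)) by exact: Phi_nat.
rewrite PhiK comp_id_r => Phi_phi'.
by rewrite -(PsiK N phi P) -[in LHS]Phi_phi' (PsiK N phi' P).
Qed.

Lemma universal_ext N (f g : hom Cob N) :
  (forall P, tensf AM (idm (w P)) f ∘ delta P = tensf AM (idm (w P)) g ∘ delta P) -> f = g.
Proof.
case: (rep) => [PhiK [_ Phi_nat]] fg.
rewrite -(PhiK _ f) -(PhiK _ g) -[RHS]comp_id_l.
apply: Phi_nat => P.
by rewrite tensf_id comp_id_l !universal_factor !PhiK fg.
Qed.

Lemma coend_comult_eq : coend_Delta_eq w Cob delta coend_comult.
Proof. by move=> P; rewrite -universal_factor. Qed.

Lemma coend_counit_eq : coend_eps_eq w Cob delta coend_counit.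
Proof. by move=> P; rewrite -universal_factor. Qed.

Lemma coend_comult_unique Delta : coend_Delta_eq w Cob delta Delta -> Delta = coend_comult.
Proof. by move=> Delta_eq; apply: universal_ext => P; rewrite Delta_eq coend_comult_eq. Qed.

Lemma coend_counit_unique eps : coend_eps_eq w Cob delta eps -> eps = coend_counit.
Proof. by move=> eps_eq; apply: universal_ext => P; rewrite eps_eq coend_counit_eq. Qed.

Lemma coend_coassoc :
  assoc AM Cob Cob Cob ∘ tensf AM coend_comult (idm Cob) ∘ coend_comult
  = tensf AM (idm Cob) coend_comult ∘ coend_comult.
Proof.
apply: universal_ext => P.
rewrite !tensf_compr; comp_normalize.
rewrite !(postcomp_eq (coend_comult_eq P)); comp_normalize.
rewrite -(postcomp_eq2 (assoc_nat_m _ _ _ _ _ _)).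
rewrite (postcomp_eq (tensfl_eq _ _ _ _ _ (coend_comult_eq P))) !tensf_compl; comp_normalize.
rewrite -pentagon -assoc_nat_r -(postcomp_eq2 (tensf_interchange AM _ _ _ _ _ _)).
rewrite (postcomp_eq (coend_comult_eq P)); comp_normalize.
by rewrite -(postcomp_eq2 (assoc_nat_l _ _ _ _ _ _)).
Qed.

Lemma coend_counitl : lunit AM Cob ∘ tensf AM coend_counit (idm Cob) ∘ coend_comult = idm Cob.
Proof.
apply: universal_ext => P.
rewrite tensf_id comp_id_l !tensf_compr; comp_normalize.
rewrite (postcomp_eq (coend_comult_eq P)); comp_normalize.
rewrite -(postcomp_eq2 (assoc_nat_m _ _ _ _ _ _)).
rewrite (postcomp_eq (tensfl_eq _ _ _ _ _ (coend_counit_eq P))) triangle.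
by rewrite (tensfl_eq _ _ _ _ _ (proj2 (runit_iso _ _ _))) tensf_id comp_id_l.
Qed.

Lemma coend_counitr : runit AM Cob ∘ tensf AM (idm Cob) coend_counit ∘ coend_comult = idm Cob.
Proof.
apply: universal_ext => P.
rewrite tensf_id comp_id_l !tensf_compr; comp_normalize.
rewrite (postcomp_eq (coend_comult_eq P)); comp_normalize.
rewrite -(postcomp_eq2 (assoc_nat_r _ _ _ _ _ _)).
rewrite -(postcomp_eq2 (tensf_interchange AM _ _ _ _ _ _)) (postcomp_eq (coend_counit_eq P)).
by rewrite tensf_runit_assoc runit_nat -comp_assoc (proj2 (runit_iso _ _ _)) comp_id_r.
Qed.

Lemma coend_is_coalgebra : is_coalgebra AM Cob coend_comult coend_counit.
Proof. by split; [exact: coend_coassoc | split; [exact: coend_counitl | exact: coend_counitr]]. Qed.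

Lemma universal_comodule P : is_comodule AM Cob coend_comult coend_counit (w P) (delta P).
Proof.
split; first by rewrite coend_comult_eq.
by rewrite -comp_assoc coend_counit_eq (proj2 (runit_iso _ _ _)).
Qed.

End Coend.

Arguments universal_CMorphism {C CM A AM AC ACM B BC w Cob} Psi.
Arguments coend_comult {C CM A AM AC ACM B BC w Cob} Phi Psi.
Arguments coend_counit {C CM A AM AC ACM B BC w Cob} Phi.

Section CoendUniqueness.
Context {C : Category} {CM : Monoidal C} {A : Category} {AM : Monoidal A}
  {AC : Action CM A} {ACM : CMonoidal AM AC}
  {B : Category} {BC : Action CM B} {w : CFunctor BC AC}
  {Cob Cob' : A}
  {Phi : forall N : A, NatC ACM w N -> hom Cob N} {Psi : forall N : A, hom Cob N -> NatC ACM w N}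
  {Phi' : forall N : A, NatC ACM w N -> hom Cob' N} {Psi' : forall N : A, hom Cob' N -> NatC ACM w N}
  (rep : represents ACM w Cob Phi Psi) (rep' : represents ACM w Cob' Phi' Psi').

Local Notation delta := (universal ACM w Cob Psi).
Local Notation delta' := (universal ACM w Cob' Psi').

Lemma coend_coalgebra_unique (Delta : hom Cob (tens AM Cob Cob)) (eps : hom Cob (munit AM))
    (Delta' : hom Cob' (tens AM Cob' Cob')) (eps' : hom Cob' (munit AM)) :
  coend_Delta_eq w Cob delta Delta -> coend_eps_eq w Cob delta eps ->
  coend_Delta_eq w Cob' delta' Delta' -> coend_eps_eq w Cob' delta' eps' ->
  exists (g : hom Cob Cob') (g' : hom Cob' Cob),
    is_inverse g g' /\ is_coalgebra_hom AM Cob Cob' Delta eps Delta' eps' g.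
Proof.
move=> Delta_eq eps_eq Delta'_eq eps'_eq.
set g := Phi Cob' (Psi' Cob' (idm Cob')).
set g' := Phi' Cob (Psi Cob (idm Cob)).
have g_delta P : tensf AM (idm (w P)) g ∘ delta P = delta' P.
  by rewrite -(universal_factor rep).
have g'_delta' P : tensf AM (idm (w P)) g' ∘ delta' P = delta P.
  by rewrite -(universal_factor rep').
exists g, g'; split; [split|split].
- apply: (universal_ext rep) => P.
  by rewrite tensf_compr -comp_assoc g_delta g'_delta' tensf_id comp_id_l.
- apply: (universal_ext rep') => P.
  by rewrite tensf_compr -comp_assoc g'_delta' g_delta tensf_id comp_id_l.
- apply: (universal_ext rep) => P.
  rewrite !tensf_compr; comp_normalize.
  rewrite (postcomp_eq (Delta_eq P)); comp_normalize.
  rewrite -assoc_nat (tensf_split AM _ _ _ _ (tensf AM (idm _) g) g); comp_normalize.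
  rewrite -(postcomp_eq2 (tensf_interchange AM _ _ _ _ _ _)).
  rewrite (postcomp_eq (g_delta P)) (postcomp_eq (tensfl_eq _ _ _ _ _ (g_delta P))).
  by rewrite (postcomp_eq (g_delta P)) Delta'_eq.
- apply: (universal_ext rep) => P.
  by rewrite tensf_compr -comp_assoc g_delta eps'_eq eps_eq.
Qed.

End CoendUniqueness.

Theorem proposition3p3
  (C : Category) (CM : Monoidal C) (CBr : Braiding CM)
  (A : Category) (AM : Monoidal A) (AC : Action CM A) (ACM : CMonoidal AM AC)
  (B : Category) (BC : Action CM B) (w : CFunctor BC AC)
  (Cob : A) (Phi : forall N : A, NatC ACM w N -> hom Cob N)
  (Psi : forall N : A, hom Cob N -> NatC ACM w N) :
  represents ACM w Cob Phi Psi ->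
  let delta := universal ACM w Cob Psi in
  exists (Delta : hom Cob (tens AM Cob Cob)) (eps : hom Cob (munit AM)),
    (* C is a coalgebra, with Delta, eps given by the defining equations *)
    is_coalgebra AM Cob Delta eps /\
    coend_Delta_eq w Cob delta Delta /\
    coend_eps_eq w Cob delta eps /\
    (* Delta and eps are determined by these equations *)
    (forall Delta', coend_Delta_eq w Cob delta Delta' -> Delta' = Delta) /\
    (forall eps', coend_eps_eq w Cob delta eps' -> eps' = eps) /\
    (* uniqueness of the coalgebra up to coalgebra isomorphism *)
    (forall (Cob' : A) (Phi' : forall N : A, NatC ACM w N -> hom Cob' N)
            (Psi' : forall N : A, hom Cob' N -> NatC ACM w N),
        represents ACM w Cob' Phi' Psi' ->
        forall (Delta' : hom Cob' (tens AM Cob' Cob')) (eps' : hom Cob' (munit AM)),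
          coend_Delta_eq w Cob' (universal ACM w Cob' Psi') Delta' ->
          coend_eps_eq w Cob' (universal ACM w Cob' Psi') eps' ->
          exists (g : hom Cob Cob') (g' : hom Cob' Cob),
            is_inverse g g' /\ is_coalgebra_hom AM Cob Cob' Delta eps Delta' eps' g) /\
    (* every omega(P) is a C-comodule via delta_P *)
    (forall P : B, is_comodule AM Cob Delta eps (w P) (delta P)) /\
    (* every omega(f) is a morphism of C-comodules *)
    (forall (P Q : B) (f : hom P Q),
        is_comodule_hom AM Cob (w P) (w Q) (delta P) (delta Q) (fhom w f)) /\
    (* X . omega(P), with coaction induced by 1_X . delta_P, is a C-comodule, and
       omega(X . P) is isomorphic to it as a C-comodule *)
    (forall (X : C) (P : B),
        is_comodule AM Cob Delta eps (act AC X (w P))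
          (chi_inv ACM X (w P) Cob ∘ actf AC (idm X) (delta P)) /\
        exists (g : hom (w (act BC X P)) (act AC X (w P)))
               (g' : hom (act AC X (w P)) (w (act BC X P))),
          is_inverse g g' /\
          is_comodule_hom AM Cob (w (act BC X P)) (act AC X (w P))
            (delta (act BC X P)) (chi_inv ACM X (w P) Cob ∘ actf AC (idm X) (delta P)) g).
Proof.
move=> rep delta.
exists (coend_comult Phi Psi), (coend_counit Phi).
split; first exact: coend_is_coalgebra rep.
split; first exact: coend_comult_eq rep.
split; first exact: coend_counit_eq rep.
split; first exact: coend_comult_unique rep.
split; first exact: coend_counit_unique rep.
split.
  move=> Cob' Phi' Psi' rep' Delta' eps'.
  exact: coend_coalgebra_unique rep rep' _ _ _ _ (coend_comult_eq rep) (coend_counit_eq rep).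
split; first exact: universal_comodule rep.
split; first by case: (universal_CMorphism Psi).
move=> X P; split; first exact: act_comodule (universal_comodule rep P).
exists (xi w X P), (xi_inv w X P); split; first exact: xi_iso.
exact: xi_is_comodule_hom (universal_CMorphism Psi) X P.
Qed.
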